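(* Let $k$ be a positive integer and $n_0,\ldots,n_{k-1}$ positive integers, with indices read modulo $k$. For each $j\in\{0,\ldots,k-1\}$ let $A^{(j)}$ be a real $n_j\times n_{j+1}$ matrix, and let $A=A^{(0)}A^{(1)}\cdots A^{(k-1)}$ (an $n_0\times n_0$ matrix). If the signed digraph $G=G_{A^{(0)}\cdots A^{(k-1)}}$ is e-cycle-free, then $A$ is a $P_0$-matrix.
   Context: Indices $j$ are taken modulo $k$ (so $n_k=n_0$ and $A^{(k-1)}$ is $n_{k-1}\times n_0$). The signed digraph $G=G_{A^{(0)}\cdots A^{(k-1)}}$ has vertex set the disjoint union of sets $V_0,\ldots,V_{k-1}$ with $V_j=\{V_j^1,\ldots,V_j^{n_j}\}$; there is a directed edge from $V_j^r$ to $V_{j+1}^s$ if and only if $(A^{(j)})_{rs}\neq 0$, and this edge has sign equal to the sign of $(A^{(j)})_{rs}$; there are no other edges (when $k=1$ this means an edge from $V_0^r$ to $V_0^s$, possibly a loop, iff $(A^{(0)})_{rs}\ne 0$). Every directed cycle in $G$ has length a multiple of $k$. A directed cycle with $kr_1$ edges, of which $r_2$ are negative, is an e-cycle if $(-1)^{r_1+r_2}=1$ and an o-cycle otherwise. $G$ is e-cycle-free if it contains no e-cycle. A $P_0$-matrix is a real square matrix all of whose principal minors are nonnegative. *)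

From HB Require Import structures.
From mathcomp Require Import all_boot all_order all_algebra.
Set Implicit Arguments. Unset Strict Implicit. Unset Printing Implicit Defensive.
Import Order.TTheory GRing.Theory Num.Theory.
Local Open Scope ring_scope.

(* The dimensions are given as n : nat -> nat; only n 0, ..., n (k-1) matter,
   and the convention "indices mod k" is imposed by the hypothesis n k = n 0.
   The matrices are A j : 'M_(n j, n j.+1) for j < k (A j for j >= k is unused). *)

Fixpoint chain_prod (R : pzRingType) (n : nat -> nat)
    (A : forall j : nat, 'M[R]_(n j, n j.+1)) (m : nat) : 'M[R]_(n 0%N, n m) :=
  match m with
  | 0 => 1%:M
  | m'.+1 => chain_prod A m' *m A m'
  end.

Definition cyc_prod (R : pzRingType) (k : nat) (n : nat -> nat)
    (A : forall j : nat, 'M[R]_(n j, n j.+1)) (hk : n k = n 0%N) : 'M[R]_(n 0%N) :=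
  castmx (erefl, hk) (chain_prod A k).

(* Entry (A^(j))_{r s} (0 if out of range). *)
Definition entry (R : pzRingType) (n : nat -> nat)
    (A : forall j : nat, 'M[R]_(n j, n j.+1)) (j r s : nat) : R :=
  match (insub r : option 'I_(n j)), (insub s : option 'I_(n j.+1)) with
  | Some r', Some s' => A j r' s'
  | _, _ => 0
  end.

(* Signed digraph G: vertex V_j^r is encoded as the pair (j, r) (0-based r),
   with j < k and r < n j.  Edge V_j^r -> V_{j+1 mod k}^s iff (A^(j))_{rs} <> 0. *)
Definition is_vertex (k : nat) (n : nat -> nat) (v : nat * nat) : bool :=
  (v.1 < k)%N && (v.2 < n v.1)%N.

Definition gedge (R : pzRingType) (k : nat) (n : nat -> nat)
    (A : forall j : nat, 'M[R]_(n j, n j.+1)) (v w : nat * nat) : bool :=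
  [&& (v.1 < k)%N, w.1 == (v.1.+1 %% k)%N & entry A v.1 v.2 w.2 != 0].

(* A directed cycle: a nonempty list of pairwise distinct vertices c, with an
   edge from each vertex to the next one (cyclically).  Its edges are the
   pairs in zip c (rot 1 c). *)
Definition dcycle (R : pzRingType) (k : nat) (n : nat -> nat)
    (A : forall j : nat, 'M[R]_(n j, n j.+1)) (c : seq (nat * nat)) : Prop :=
  [/\ c != [::], uniq c, all (is_vertex k n) c &
      all (fun e => gedge k A e.1 e.2) (zip c (rot 1 c))].

Definition neg_edges (R : numDomainType) (n : nat -> nat)
    (A : forall j : nat, 'M[R]_(n j, n j.+1)) (c : seq (nat * nat)) : nat :=
  count (fun e : (nat * nat) * (nat * nat) => entry A e.1.1 e.1.2 e.2.2 < 0)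
        (zip c (rot 1 c)).

(* e-cycle: k*r1 edges, r2 negative, (-1)^(r1+r2) = 1 *)
Definition e_cycle (R : numDomainType) (k : nat) (n : nat -> nat)
    (A : forall j : nat, 'M[R]_(n j, n j.+1)) (c : seq (nat * nat)) : Prop :=
  dcycle k A c /\ (-1 : R) ^+ (size c %/ k + neg_edges A c) = 1.

Definition e_cycle_free (R : numDomainType) (k : nat) (n : nat -> nat)
    (A : forall j : nat, 'M[R]_(n j, n j.+1)) : Prop :=
  forall c, ~ e_cycle k A c.

Definition P0_matrix (R : numDomainType) (m : nat) (M : 'M[R]_m) : Prop :=
  forall S : {set 'I_m},
    0 <= \det (\matrix_(i < #|S|, j < #|S|) M (enum_val i) (enum_val j)).

From HB Require Import structures.
From mathcomp Require Import all_boot all_order all_algebra perm.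
Set Implicit Arguments. Unset Strict Implicit. Unset Printing Implicit Defensive.
Import Order.TTheory GRing.Theory Num.Theory.
Local Open Scope ring_scope.

(* Expanding the product one factor at a time, the principal minor of A on an
   index set S becomes a sum, over permutations sg of S and injective choices of
   intermediate vertices, of (-1)^sg times a product of edge weights of G;
   non-injective choices vanish, being determinants with two equal columns.
   Through the chosen vertices each cycle of sg of length L closes up into a
   directed cycle of G with kL edges.  As G has only o-cycles, the weight of
   such a cycle has the sign of (-1)^(L+1), and (-1)^sg is the product of these
   signs over the cycles of sg, so every term of the sum is nonnegative. *)

Lemma det_cols (R : comNzRingType) m (X : 'M[R]_m) :
  \det X = \sum_(s : 'S_m) (-1) ^+ s * \prod_i X (s i) i.
Proof.
rewrite -det_tr; apply: eq_bigr => s _; congr (_ * _).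
by apply: eq_bigr => i _; rewrite mxE.
Qed.

Lemma det_sum_cols (R : comNzRingType) m p
    (C : 'I_m -> 'I_p -> R) (B : 'I_p -> 'I_m -> R) :
  \det (\matrix_(i, l) \sum_(z < p) C i z * B z l) =
  \sum_(f : {ffun 'I_m -> 'I_p}) \det (\matrix_(i, l) C i (f l)) * \prod_l B (f l) l.
Proof.
rewrite det_cols.
transitivity (\sum_(f : {ffun 'I_m -> 'I_p}) \sum_(s : 'S_m)
    (-1) ^+ s * (\prod_l C (s l) (f l)) * \prod_l B (f l) l).
  rewrite exchange_big /=; apply: eq_bigr => s _.
  under eq_bigr do rewrite mxE.
  rewrite bigA_distr_bigA big_distrr /=; apply: eq_bigr => f _.
  by rewrite big_split /= mulrA.
apply: eq_bigr => f _; rewrite det_cols big_distrl /=.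
by apply: eq_bigr => s _; congr (_ * _ * _); apply: eq_bigr => l _; rewrite mxE.
Qed.

Lemma signr_count_lt0_prod_ge0 (R : realDomainType) (E : seq R) :
  0 <= (-1) ^+ count (fun x => x < 0) E * \prod_(x <- E) x.
Proof.
elim: E => [|a E IH] /=; first by rewrite big_nil mulr1.
rewrite big_cons exprD mulrACA; apply: mulr_ge0 => //.
by case: ltrP => /= [a_lt0|a_ge0]; rewrite ?mulN1r ?oppr_ge0 ?mul1r // ltW.
Qed.

Lemma big_porbits (T : finType) (s : {perm T})
    (R : Type) (idx : R) (op : Monoid.com_law idx) (F : T -> R) :
  \big[op/idx]_i F i = \big[op/idx]_(O in porbits s) \big[op/idx]_(i in O) F i.
Proof.
rewrite (partition_big_imset (porbit s)) /=; apply: eq_bigr => _ /imsetP[x _ ->].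
by apply: eq_bigl => i; rewrite eq_porbit_mem.
Qed.

Lemma signr_odd_perm_porbits (R : pzRingType) (T : finType) (s : {perm T}) :
  (-1) ^+ s = \prod_(O in porbits s) (-1) ^+ #|O|.+1 :> R.
Proof.
have cardT : #|T| = (\sum_(O in porbits s) #|O|)%N.
  by rewrite -sum1_card (big_porbits s); apply: eq_bigr => O _; rewrite sum1_card.
rewrite /odd_perm -oddD signr_odd cardT -[#|porbits s|]sum1_card -big_split /=.
rewrite (big_morph (fun m => (-1) ^+ m) (exprD (-1)) (expr0 (-1))).
by apply: eq_bigr => O _; rewrite addn1.
Qed.

Lemma rot1_mkseq (T : Type) (f : nat -> T) m :
  f m = f 0%N -> rot 1 (mkseq f m) = mkseq (f \o succn) m.
Proof.
case: m => [//|m] fm.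
have -> : mkseq f m.+1 = f 0%N :: mkseq (f \o succn) m.
  rewrite /mkseq /= -[1%N]addn0 iotaDl -map_comp.
  by congr (_ :: _); apply: eq_map => t /=; rewrite add1n.
by rewrite rot1_cons mkseqS /= fm.
Qed.

Lemma big_traject (R : Type) (idx : R) (op : Monoid.law idx)
    (T : Type) (f : T -> T) x m (F : T -> R) :
  \big[op/idx]_(y <- traject f x m) F y = \big[op/idx]_(q < m) F (iter q f x).
Proof.
elim: m x => [|m IH] x; first by rewrite big_nil big_ord0.
rewrite trajectS big_cons IH big_ord_recl; congr (op _ _).
by apply: eq_bigr => q _; rewrite -iterSr.
Qed.

Lemma big_porbit_iter (T : finType) (s : {perm T}) x
    (R : Type) (idx : R) (op : Monoid.com_law idx) (F : T -> R) :
  \big[op/idx]_(i in porbit s x) F i = \big[op/idx]_(q < #|porbit s x|) F (iter q s x).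
Proof.
rewrite -big_traject (big_uniq _ (uniq_traject_porbit s x)).
by apply: eq_bigl => i; rewrite porbit_traject.
Qed.

Lemma big_ord_mul_divmod (R : Type) (idx : R) (op : Monoid.law idx)
    L k (F : nat -> nat -> R) : (0 < k)%N ->
  \big[op/idx]_(t < L * k) F (t %/ k)%N (t %% k)%N =
  \big[op/idx]_(q < L) \big[op/idx]_(j < k) F q j.
Proof.
move=> k_gt0; elim: L => [|L IH]; first by rewrite !big_ord0.
rewrite big_ord_recr -IH mulSnr big_split_ord; congr (op _ _).
by apply: eq_bigr => j _; rewrite /= modnMDl modn_small // divnMDl // divn_small // addn0.
Qed.

Lemma divmod_succ (T : Type) k (G : nat -> nat -> T) t :
  (0 < k)%N -> (forall q, G k q = G 0%N q.+1) ->
  G (t.+1 %% k)%N (t.+1 %/ k)%N = G (t %% k).+1 (t %/ k)%N.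
Proof.
move=> k_gt0 Gk; have tS : t.+1 = (t %/ k * k + (t %% k).+1)%N by rewrite addnS -divn_eq.
have [lt_k|le_k] := ltnP (t %% k).+1 k.
  by rewrite tS modnMDl (modn_small lt_k) divnMDl // (divn_small lt_k) addn0.
have modSk : (t %% k).+1 = k by apply/anti_leq; rewrite le_k ltn_pmod.
by rewrite tS modSk -mulSnr modnMl mulnK // Gk.
Qed.

Lemma entry_neq0_bounds (R : pzRingType) (n : nat -> nat)
    (A : forall j, 'M[R]_(n j, n j.+1)) j r s :
  entry A j r s != 0 -> (r < n j)%N && (s < n j.+1)%N.
Proof.
rewrite /entry; case: insubP => [r' -> _|]; last by rewrite eqxx.
by case: insubP => [s' -> _ _|]; last by rewrite eqxx.
Qed.

Section Cycles.

Variables (R : realFieldType) (k : nat) (n : nat -> nat).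
Variable A : forall j, 'M[R]_(n j, n j.+1).
Hypothesis k_gt0 : (0 < k)%N.
Hypothesis Afree : e_cycle_free k A.

Definition cycle_weight (c : seq (nat * nat)) :=
  \prod_(e <- zip c (rot 1 c)) entry A e.1.1 e.1.2 e.2.2.

Lemma cycle_weight_sign c :
  dcycle k A c -> 0 <= (-1) ^+ (size c %/ k).+1 * cycle_weight c.
Proof.
move=> dc.
(* e-cycle-freeness makes [size c %/ k + neg_edges A c] odd, while
   [neg_edges A c] is the number of negative factors of the weight. *)
have not_e : (-1) ^+ (size c %/ k + neg_edges A c) != 1 :> R.
  by apply/eqP => e1; apply: (Afree (conj dc e1)).
have := signr_count_lt0_prod_ge0
  [seq entry A e.1.1 e.1.2 e.2.2 | e : (nat * nat) * (nat * nat) <- zip c (rot 1 c)].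
rewrite count_map big_map -/(neg_edges A c) -/(cycle_weight c).
move: not_e; rewrite exprS exprD.
rewrite -(signr_odd _ (size c %/ k)) -(signr_odd _ (neg_edges A c)).
by case: odd; case: odd; rewrite /= ?expr0 ?expr1 ?mulN1r ?opprK ?mul1r ?eqxx.
Qed.

Section PermutationOrbits.

Variables (M : nat) (sg : {perm 'I_M}) (h : nat -> 'I_M -> nat).
Hypothesis h_wrap : forall i, h k i = h 0%N (sg i).
Hypothesis h_inj : forall j, (j < k)%N -> injective (h j).

Definition path_weight i := \prod_(j < k) entry A j (h j i) (h j.+1 i).

Definition orbit_vertex x j q := ((j %% k)%N, h j (iter q sg x)).

Definition orbit_walk x t := orbit_vertex x (t %% k) (t %/ k).

(* Step [t = q * k + j] of the cycle visits the vertex [V_j^r], [r = h j (sg^q x)]. *)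
Definition orbit_cycle x := mkseq (orbit_walk x) (#|porbit sg x| * k).

Lemma orbit_walkS x t : orbit_walk x t.+1 = orbit_vertex x (t %% k).+1 (t %/ k).
Proof.
apply: divmod_succ => // q.
by rewrite /orbit_vertex modnn mod0n h_wrap.
Qed.

Lemma orbit_cycle_edges x :
  zip (orbit_cycle x) (rot 1 (orbit_cycle x)) =
  mkseq (fun t => (orbit_walk x t, orbit_walk x t.+1)) (#|porbit sg x| * k).
Proof.
rewrite /orbit_cycle rot1_mkseq; first by rewrite /mkseq zip_map.
by rewrite /orbit_walk /orbit_vertex modnMl mulnK // iter_porbit !mod0n div0n.
Qed.

Lemma orbit_cycle_weight x :
  cycle_weight (orbit_cycle x) = \prod_(i in porbit sg x) path_weight i.
Proof.
pose F q j := entry A j (h j (iter q sg x)) (h j.+1 (iter q sg x)).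
rewrite /cycle_weight orbit_cycle_edges big_map -val_enum_ord big_map big_enum.
rewrite (eq_bigr (fun t : 'I_ _ => F (t %/ k) (t %% k))%N) => [|t _]; last first.
  by rewrite (orbit_walkS x t) /orbit_walk /orbit_vertex /= modn_mod.
by rewrite big_ord_mul_divmod // big_porbit_iter.
Qed.

Lemma orbit_cycle_dcycle x :
  \prod_(i in porbit sg x) path_weight i != 0 -> dcycle k A (orbit_cycle x).
Proof.
rewrite big_porbit_iter => /prodf_neq0 w_neq0.
have entry_neq0 t : (t < #|porbit sg x| * k)%N ->
    entry A (t %% k) (h (t %% k) (iter (t %/ k) sg x))
      (h (t %% k).+1 (iter (t %/ k) sg x)) != 0.
  rewrite -ltn_divLR // => ltL.
  by have /prodf_neq0/(_ (Ordinal (ltn_pmod t k_gt0)) isT) := w_neq0 (Ordinal ltL) isT.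
split.
- by rewrite -size_eq0 size_mkseq muln_eq0 negb_or card_porbit_neq0 -lt0n k_gt0.
- apply/mkseq_uniqP => t t' /[!inE] ltt ltt' [eq_mod].
  rewrite !modn_mod in eq_mod; rewrite eq_mod => /(h_inj (ltn_pmod t' k_gt0)) eq_iter.
  have eq_div : (t %/ k = t' %/ k)%N.
    have traject_uniq := uniq_traject_porbit sg x.
    apply/eqP; rewrite -(nth_uniq x _ _ traject_uniq) ?size_traject ?ltn_divLR //.
    by rewrite !nth_traject ?ltn_divLR // eq_iter.
  by rewrite [LHS](divn_eq t k) [RHS](divn_eq t' k) eq_div eq_mod.
- apply/allP => v /mapP[t]; rewrite mem_iota add0n => ltN ->.
  rewrite /is_vertex /orbit_walk /orbit_vertex /= modn_mod ltn_pmod //.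
  by have /andP[] := entry_neq0_bounds (entry_neq0 t ltN).
- rewrite orbit_cycle_edges; apply/allP => v /mapP[t]; rewrite mem_iota add0n => ltN ->.
  rewrite /gedge (orbit_walkS x t) /orbit_walk /orbit_vertex /= !modn_mod ltn_pmod // eqxx.
  exact: entry_neq0.
Qed.

Lemma orbit_weight_ge0 x :
  0 <= (-1) ^+ #|porbit sg x|.+1 * \prod_(i in porbit sg x) path_weight i.
Proof.
have [->|w_neq0] := eqVneq (\prod_(i in porbit sg x) path_weight i) 0.
  by rewrite mulr0.
have := cycle_weight_sign (orbit_cycle_dcycle w_neq0).
by rewrite orbit_cycle_weight size_mkseq mulnK.
Qed.

Lemma perm_weight_ge0 : 0 <= (-1) ^+ sg * \prod_i path_weight i.
Proof.
rewrite signr_odd_perm_porbits (big_porbits sg) -big_split /=.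
by apply: prodr_ge0 => _ /imsetP[x _ ->]; apply: orbit_weight_ge0.
Qed.

End PermutationOrbits.

End Cycles.

Section ChainMinors.

Variables (R : comNzRingType) (n : nat -> nat) (A : forall j, 'M[R]_(n j, n j.+1)).

Definition chain_entry m x y : R :=
  match insub x : option 'I_(n 0%N), insub y : option 'I_(n m) with
  | Some x', Some y' => chain_prod A m x' y'
  | _, _ => 0
  end.

Lemma entry_ord j (r : 'I_(n j)) y :
  entry A j r y = if insub y : option 'I_(n j.+1) is Some y' then A j r y' else 0.
Proof. by rewrite /entry valK. Qed.

Lemma chain_entryS m x y :
  chain_entry m.+1 x y = \sum_(z < n m) chain_entry m x z * entry A m z y.
Proof.
rewrite /chain_entry; case: insubP => [x' _ _|_]; last first.
  by rewrite big1 // => z _; rewrite mul0r.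
under eq_bigr do rewrite valK entry_ord.
case: insubP => [y' _ _|_]; last by rewrite big1 // => z _; rewrite mulr0.
by rewrite /= mxE.
Qed.

Lemma chain_entry1 x y : chain_entry 1 x y = entry A 0 x y.
Proof.
rewrite /chain_entry /entry; case: insubP => [x' _ _|_] //.
by case: insubP => [y' _ _|_] //=; rewrite mul1mx.
Qed.

Lemma cyc_prod_chain_entry k (hk : n k = n 0%N) (x y : 'I_(n 0%N)) :
  cyc_prod A hk x y = chain_entry k x y.
Proof.
rewrite /cyc_prod castmxE /chain_entry valK; case: insubP => [y' _ y'E|].
  by congr (chain_prod A k _ _); apply: val_inj.
by move=> y_out; rewrite hk ltn_ord in y_out.
Qed.

Variables (M : nat) (s : 'I_M -> nat).

Definition chain_minor m (g : 'I_M -> nat) :=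
  \det (\matrix_(i, l) chain_entry m (s i) (g l)).

Lemma chain_minor1 g :
  chain_minor 1 g = \sum_(sg : 'S_M) (-1) ^+ sg * \prod_i entry A 0 (s i) (g (sg i)).
Proof.
apply: eq_bigr => sg _; congr (_ * _).
by apply: eq_bigr => i _; rewrite mxE chain_entry1.
Qed.

Lemma chain_minorS m g :
  chain_minor m.+1 g = \sum_(f : {ffun 'I_M -> 'I_(n m)})
    chain_minor m (fun l => val (f l)) * \prod_l entry A m (f l) (g l).
Proof.
rewrite /chain_minor.
have -> : \matrix_(i, l) chain_entry m.+1 (s i) (g l) =
    \matrix_(i, l) \sum_(z < n m) chain_entry m (s i) z * entry A m z (g l).
  by apply/matrixP => i l; rewrite !mxE chain_entryS.
by rewrite det_sum_cols.
Qed.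

Lemma chain_minor_eq0 m g l1 l2 : l1 != l2 -> g l1 = g l2 -> chain_minor m g = 0.
Proof.
move=> neq_l g_eq; rewrite /chain_minor -det_tr (determinant_alternate neq_l) //.
by move=> i; rewrite !mxE g_eq.
Qed.

End ChainMinors.

Section ChainMinorSign.

Variables (R : realFieldType) (k : nat) (n : nat -> nat).
Variable A : forall j, 'M[R]_(n j, n j.+1).
Hypotheses (k_gt0 : (0 < k)%N) (Afree : e_cycle_free k A).
Variables (M : nat) (s : 'I_M -> nat).
Hypothesis s_inj : injective s.

Definition tail_weight (h : nat -> 'I_M -> nat) m :=
  \prod_(m <= j < k) \prod_l entry A j (h j l) (h j.+1 l).

Lemma chain_minor1_ge0 h :
  (forall l, h k l = s l) -> (forall j, (0 < j < k)%N -> injective (h j)) ->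
  0 <= chain_minor A s 1 (h 1%N) * tail_weight h 1.
Proof.
move=> h_end h_inj; rewrite chain_minor1 big_distrl /=; apply: sumr_ge0 => sg _.
pose h' j i := if j == 0%N then s i else h j (sg i).
have h'_wrap i : h' k i = h' 0%N (sg i) by rewrite /h' gtn_eqF // h_end.
have h'_inj j : (j < k)%N -> injective (h' j).
  rewrite /h'; case: eqP => [_ _|/eqP j_neq0 lt_jk i1 i2]; first exact: s_inj.
  by move/(h_inj j); rewrite lt0n j_neq0 lt_jk => /(_ isT) /perm_inj.
have := perm_weight_ge0 k_gt0 Afree h'_wrap h'_inj.
suff -> : \prod_i path_weight k A h' i =
    \prod_i entry A 0 (s i) (h 1%N (sg i)) * tail_weight h 1 by rewrite mulrA.
rewrite /path_weight exchange_big /=.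
rewrite -(big_mkord xpredT (fun j => \prod_i entry A j (h' j i) (h' j.+1 i))) big_ltn //.
congr (_ * _); apply: eq_big_nat => j /andP[j_gt0 _].
rewrite [RHS](reindex_inj (@perm_inj _ sg)) /=.
by apply: eq_bigr => i _; rewrite /h' !gtn_eqF.
Qed.

(* [h j l] is the row of [A j] chosen for column [l]; the factors [A j] with
   [m <= j] have already been expanded. *)
Lemma chain_minor_ge0 m : (0 < m <= k)%N ->
  forall h, (forall l, h k l = s l) -> (forall j, (m <= j < k)%N -> injective (h j)) ->
  0 <= chain_minor A s m (h m) * tail_weight h m.
Proof.
elim: m => [//|[|m] IH] /andP[_ le_mk] h h_end h_inj.
  exact: chain_minor1_ge0.
rewrite chain_minorS big_distrl /=; apply: sumr_ge0 => f _.
have [/injectiveP f_inj|/injectivePn[l1 [l2 neq_l eq_f]]] := boolP (injectiveb f);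
  last by rewrite (chain_minor_eq0 _ _ _ neq_l (congr1 val eq_f)) !mul0r.
pose h' j := if j == m.+1 then fun l => val (f l) else h j.
have tail_h' : tail_weight h' m.+1 =
    \prod_l entry A m.+1 (f l) (h m.+2 l) * tail_weight h m.+2.
  rewrite /tail_weight big_ltn // /h' eqxx gtn_eqF //; congr (_ * _).
  by apply: eq_big_nat => j /andP[lt_mj _]; rewrite !gtn_eqF // ltnW.
have := IH (ltnW le_mk) h'; rewrite tail_h' /h' eqxx mulrA; apply.
  by move=> l; rewrite gtn_eqF.
move=> j /andP[le_mj lt_jk]; case: eqP => [_ l1 l2 /val_inj/f_inj //|/eqP neq_j].
by apply: h_inj; rewrite lt_jk ltn_neqAle eq_sym neq_j le_mj.
Qed.

End ChainMinorSign.

Theorem theorem1 (R : realFieldType) (k : nat) (n : nat -> nat)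
    (hk0 : (0 < k)%N) (hn : forall j, (j < k)%N -> (0 < n j)%N) (hk : n k = n 0%N)
    (A : forall j : nat, 'M[R]_(n j, n j.+1)) :
  e_cycle_free k A -> P0_matrix (cyc_prod A hk).
Proof.
move=> Afree S; pose s (i : 'I_#|S|) := val (enum_val i).
have s_inj : injective s by move=> i j /val_inj /enum_val_inj.
have k_range : (0 < k <= k)%N by rewrite hk0 leqnn.
have no_layer j : (k <= j < k)%N -> injective s by rewrite ltnNge andbN.
have := chain_minor_ge0 hk0 Afree s_inj k_range (fun _ => erefl) no_layer.
rewrite /tail_weight big_geq // mulr1 => minor_ge0.
suff -> : \matrix_(i, j) cyc_prod A hk (enum_val i) (enum_val j) =
    \matrix_(i, l) chain_entry A k (s i) (s l) by [].
by apply/matrixP => i j; rewrite !mxE cyc_prod_chain_entry.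
Qed.
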